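(* Let $n\ge 2$ and let $V'=\{v_1<\dots<v_{n-1}\}$ be a set of $n-1$ positive integers with $\kappa(V')\ge\frac1n$. If $v_n$ is an integer with $v_n\ge n\,v_{n-1}$, then $V=V'\cup\{v_n\}$ satisfies $\kappa(V)\ge\frac{1}{n+1}$.
   Context: For $x\in\mathbb{R}$, $\|x\|=\min\{x-\lfloor x\rfloor,\lceil x\rceil-x\}$ denotes the distance from $x$ to the nearest integer. For a finite nonempty set $V$ of positive integers, $\kappa(V)=\sup_{t\in(0,1)}\min_{v\in V}\|tv\|$. *)

From Stdlib Require Import Reals Lra Lia List Sorted.
From Coquelicot Require Import Coquelicot.
Open Scope R_scope.

Definition rfloor (x : R) : R := IZR (Int_part x).
Definition rceil (x : R) : R := - rfloor (- x).

(* ||x|| = distance from x to the nearest integer *)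
Definition dnorm (x : R) : R := Rmin (x - rfloor x) (rceil x - x).

Definition is_min_norm (V : list nat) (t y : R) : Prop :=
  (exists v, In v V /\ y = dnorm (t * INR v)) /\
  (forall v, In v V -> y <= dnorm (t * INR v)).

Definition kappa (V : list nat) : Rbar :=
  Lub_Rbar (fun y => exists t, 0 < t < 1 /\ is_min_norm V t y).

(* Take t0 in (0,1) with min_(v in V') ||t0 v|| > 1/n - delta.  Moving t0 by at
   most r = (1/(n(n+1)) - delta) / v_(n-1) keeps every ||t v||, v in V', above
   1/(n+1), because ||.|| is 1-Lipschitz and v <= v_(n-1).  Since v_n >= n v_(n-1),
   over the same window t v_n sweeps an interval of half-width at least
   1/(n+1) - n delta, and such an interval contains a point at that distance
   from the integers.  Letting delta -> 0 gives kappa(V) >= 1/(n+1). *)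
From Stdlib Require Import Reals List Sorted Lra Lia Classical ZArith.
From Coquelicot Require Import Coquelicot.
Open Scope R_scope.

Lemma rfloor_spec x : rfloor x <= x < rfloor x + 1.
Proof. unfold rfloor. destruct (base_Int_part x). lra. Qed.

Lemma IZR_le_rfloor (k : Z) x : IZR k <= x -> IZR k <= rfloor x.
Proof.
  intros Hk. destruct (rfloor_spec x) as [_ Hx]. unfold rfloor in *.
  assert (Hlt : IZR k < IZR (Int_part x + 1)) by (rewrite plus_IZR; lra).
  apply lt_IZR in Hlt. apply IZR_le. lia.
Qed.

Lemma dnorm_le_dist (x : R) (k : Z) : dnorm x <= Rabs (x - IZR k).
Proof.
  unfold dnorm, rceil. destruct (rfloor_spec x) as [F1 F2].
  destruct (Z_le_gt_dec k (Int_part x)) as [Hk|Hk].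
  - apply IZR_le in Hk. unfold rfloor in *. rewrite Rabs_pos_eq by lra.
    apply Rle_trans with (x - IZR (Int_part x)); [apply Rmin_l | lra].
  - assert (Hk' : IZR (Int_part x + 1) <= IZR k) by (apply IZR_le; lia).
    rewrite plus_IZR in Hk'. unfold rfloor in F2.
    assert (Hfl : IZR (- k) <= rfloor (- x)) by (apply IZR_le_rfloor; rewrite opp_IZR; lra).
    rewrite opp_IZR in Hfl. rewrite Rabs_left1 by lra.
    apply Rle_trans with (- rfloor (- x) - x); [apply Rmin_r | lra].
Qed.

Lemma dnorm_attained x : exists k : Z, dnorm x = Rabs (x - IZR k).
Proof.
  unfold dnorm, rceil.
  destruct (rfloor_spec x) as [F1 F2], (rfloor_spec (- x)) as [G1 G2].
  unfold Rmin, rfloor in *. destruct (Rle_dec _ _).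
  - exists (Int_part x). rewrite Rabs_pos_eq; lra.
  - exists (- Int_part (- x))%Z. rewrite opp_IZR, Rabs_left1; lra.
Qed.

Lemma dnorm_lipschitz x y : dnorm x - Rabs (y - x) <= dnorm y.
Proof.
  destruct (dnorm_attained y) as [k ->].
  pose proof (dnorm_le_dist x k) as Hx.
  pose proof (Rabs_triang (x - y) (y - IZR k)) as Htri.
  replace (x - y + (y - IZR k)) with (x - IZR k) in Htri by ring.
  rewrite (Rabs_minus_sym x y) in Htri. lra.
Qed.

Lemma dnorm_int_add (k : Z) s : Rabs s <= 1 / 2 -> Rabs s <= dnorm (IZR k + s).
Proof.
  intros Hs. destruct (dnorm_attained (IZR k + s)) as [j ->].
  apply Rabs_le_between in Hs.
  destruct (Z_le_gt_dec j (k - 1)) as [Hj|Hj]; [|destruct (Z_le_gt_dec j k) as [Hj'|Hj']].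
  - apply IZR_le in Hj. rewrite minus_IZR in Hj.
    rewrite (Rabs_pos_eq (_ - _)) by lra. apply Rabs_le; lra.
  - assert (j = k) as -> by lia.
    replace (IZR k + s - IZR k) with s by ring. lra.
  - assert (Hj2 : IZR (k + 1) <= IZR j) by (apply IZR_le; lia). rewrite plus_IZR in Hj2.
    rewrite (Rabs_left1 (_ - _)) by lra. apply Rabs_le; lra.
Qed.

(* Any closed interval of radius h <= 1/2 contains a point at distance >= h
   from the integers: either its centre, or the nearest integer shifted by h. *)
Lemma exists_dnorm_ge_near a h :
  0 < h <= 1 / 2 -> exists x, Rabs (x - a) <= h /\ h <= dnorm x.
Proof.
  intros Hh. destruct (Rle_dec h (dnorm a)) as [Ha|Ha].
  { exists a. rewrite Rminus_diag, Rabs_R0. split; lra. }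
  destruct (dnorm_attained a) as [k Hk].
  destruct (Rle_dec (IZR k) a) as [Hka|Hka].
  - exists (IZR k + h). rewrite Rabs_pos_eq in Hk by lra. split.
    + apply Rabs_le; lra.
    + rewrite <- (Rabs_pos_eq h) at 1 by lra. apply dnorm_int_add. rewrite Rabs_pos_eq; lra.
  - exists (IZR k + - h). rewrite Rabs_left1 in Hk by lra. split.
    + apply Rabs_le; lra.
    + rewrite <- (Rabs_pos_eq h), <- Rabs_Ropp at 1 by lra.
      apply dnorm_int_add. rewrite Rabs_Ropp, Rabs_pos_eq; lra.
Qed.

Lemma exists_dnorm_mul_ge_near t0 u h :
  0 < u -> 0 < h <= 1 / 2 -> exists t, Rabs (t - t0) * u <= h /\ h <= dnorm (t * u).
Proof.
  intros Hu Hh. destruct (exists_dnorm_ge_near (t0 * u) h Hh) as [x [Hx Hxd]].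
  exists (x / u). replace (x / u * u) with x by (field; lra). split; [|exact Hxd].
  rewrite <- (Rabs_pos_eq u) at 2 by lra. rewrite <- Rabs_mult.
  replace ((x / u - t0) * u) with (x - t0 * u) by (field; lra). exact Hx.
Qed.

Lemma dnorm_mul_lipschitz t0 t u :
  0 <= u -> dnorm (t0 * u) - Rabs (t - t0) * u <= dnorm (t * u).
Proof.
  intros Hu. pose proof (dnorm_lipschitz (t0 * u) (t * u)) as Hlip.
  replace (t * u - t0 * u) with ((t - t0) * u) in Hlip by ring.
  rewrite Rabs_mult, (Rabs_pos_eq u) in Hlip; assumption.
Qed.

Lemma dnorm_mul_INR_le t (w : nat) :
  0 <= t <= 1 -> dnorm (t * INR w) <= t * INR w /\ dnorm (t * INR w) <= (1 - t) * INR w.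
Proof.
  intros Ht. pose proof (pos_INR w) as Hw. split.
  - pose proof (dnorm_le_dist (t * INR w) 0) as H0.
    rewrite Rminus_0_r, Rabs_pos_eq in H0 by nra. exact H0.
  - pose proof (dnorm_le_dist (t * INR w) (Z.of_nat w)) as Hdist.
    rewrite <- INR_IZR_INZ, Rabs_left1 in Hdist by nra. lra.
Qed.

Lemma is_min_norm_exists V t : V <> nil -> exists y, is_min_norm V t y.
Proof.
  induction V as [|a V IH]; intros Hne; [congruence|].
  destruct V as [|b V].
  - exists (dnorm (t * INR a)). split.
    + exists a. split; [left|]; reflexivity.
    + intros v [<-|[]]. lra.
  - destruct IH as [y [[v [Hv Hy]] Hmin]]; [discriminate|].
    exists (Rmin (dnorm (t * INR a)) y). split.
    + unfold Rmin. destruct (Rle_dec _ _).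
      * exists a. split; [left|]; reflexivity.
      * exists v. split; [right|]; assumption.
    + intros w [<-|Hw]; [apply Rmin_l|].
      apply Rle_trans with y; [apply Rmin_r | apply Hmin, Hw].
Qed.

Lemma Lub_Rbar_approx (E : R -> Prop) (c eps : R) :
  Rbar_le c (Lub_Rbar E) -> 0 < eps -> exists y, E y /\ c - eps < y.
Proof.
  intros Hc Heps. apply NNPP. intros Hno.
  assert (Hub : is_ub_Rbar E (c - eps)).
  { intros y Hy. apply Rnot_lt_le. intros Hlt. apply Hno. exists y. split; assumption. }
  destruct (Lub_Rbar_correct E) as [_ Hlub].
  pose proof (Rbar_le_trans _ _ _ Hc (Hlub _ Hub)) as Hle. simpl in Hle. lra.
Qed.

Lemma Lub_Rbar_ge_of_approx (E : R -> Prop) (c : R) :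
  0 < c -> (forall eps, 0 < eps < c -> exists y, E y /\ c - eps <= y) ->
  Rbar_le c (Lub_Rbar E).
Proof.
  intros Hc Happrox. destruct (Lub_Rbar_correct E) as [Hub _].
  destruct (Lub_Rbar E) as [l| |]; simpl; auto.
  - apply Rnot_lt_le. intros Hlt.
    destruct (Happrox (Rmin ((c - l) / 2) (c / 2))) as [y [Ey Hy]].
    { split; [apply Rmin_glb_lt; lra | pose proof (Rmin_r ((c - l) / 2) (c / 2)); lra]. }
    pose proof (Hub y Ey) as Hyl. pose proof (Rmin_l ((c - l) / 2) (c / 2)).
    simpl in Hyl. lra.
  - destruct (Happrox (c / 2)) as [y [Ey _]]; [lra|]. exact (Hub y Ey).
Qed.

Lemma kappa_approx (V : list nat) (c eps : R) :
  Rbar_le c (kappa V) -> 0 < eps ->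
  exists t, 0 < t < 1 /\ forall v, In v V -> c - eps < dnorm (t * INR v).
Proof.
  intros Hc Heps. destruct (Lub_Rbar_approx _ c eps Hc Heps) as [y [[t [Ht [_ Hmin]]] Hy]].
  exists t. split; [exact Ht|]. intros v Hv. specialize (Hmin v Hv). lra.
Qed.

Lemma kappa_ge_of_approx (V : list nat) (c : R) :
  V <> nil -> 0 < c ->
  (forall eps, 0 < eps < c ->
     exists t, 0 < t < 1 /\ forall v, In v V -> c - eps <= dnorm (t * INR v)) ->
  Rbar_le c (kappa V).
Proof.
  intros Hne Hc Happrox. apply Lub_Rbar_ge_of_approx; [exact Hc|].
  intros eps Heps. destruct (Happrox eps Heps) as [t [Ht Hall]].
  destruct (is_min_norm_exists V t Hne) as [y Hy].
  exists y. split; [exists t; split; assumption|].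
  destruct Hy as [[v [Hv ->]] _]. exact (Hall v Hv).
Qed.

Lemma sorted_le_last (l : list nat) :
  Sorted Nat.lt l -> forall v, In v l -> (v <= last l 0)%nat.
Proof.
  intros Hs. apply Sorted_StronglySorted in Hs; [|intros x y z; unfold Nat.lt; lia].
  induction l as [|a l IH]; intros v Hv; [destruct Hv|].
  apply StronglySorted_inv in Hs as [Hs Ha]. destruct l as [|b l].
  - destruct Hv as [<-|[]]. simpl. lia.
  - change (last (a :: b :: l) 0%nat) with (last (b :: l) 0%nat).
    destruct Hv as [<-|Hv]; [|exact (IH Hs v Hv)].
    rewrite Forall_forall in Ha. specialize (Ha b (or_introl eq_refl)).
    specialize (IH Hs b (or_introl eq_refl)). unfold Nat.lt in Ha. lia.
Qed.

Lemma last_In (l : list nat) : l <> nil -> In (last l 0%nat) l.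
Proof.
  induction l as [|a l IH]; intros Hne; [congruence|].
  destruct l as [|b l]; [left; reflexivity|].
  right. apply IH. discriminate.
Qed.

Section Extension.

Variables (n w vn : nat) (V' : list nat).
Hypotheses (Hn : (1 <= n)%nat) (Hw_pos : (0 < w)%nat) (Hw : In w V')
  (Hw_max : forall v, In v V' -> (v <= w)%nat) (Hvn : (n * w <= vn)%nat).

Let N := INR n.
Let W := INR w.

Lemma extended_witness delta t0 :
  0 < delta < 1 / (N * (N + 1)) -> 0 < t0 < 1 ->
  (forall v, In v V' -> 1 / N - delta < dnorm (t0 * INR v)) ->
  exists t, 0 < t < 1 /\
    forall v, In v (V' ++ vn :: nil) -> 1 / (N + 1) - N * delta <= dnorm (t * INR v).
Proof.
  intros Hdelta Ht0 Hgood.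
  assert (HN : 1 <= N) by (apply (le_INR 1); exact Hn).
  assert (HW : 1 <= W) by (apply (le_INR 1); exact Hw_pos).
  assert (HVn : N * W <= INR vn) by (unfold N, W; rewrite <- mult_INR; apply le_INR, Hvn).
  assert (Hgap : 1 / N - 1 / (N * (N + 1)) = 1 / (N + 1)) by (field; lra).
  assert (Hc : 0 < 1 / (N + 1) <= 1 / 2).
  { split; [apply Rdiv_lt_0_compat; lra|].
    apply Rmult_le_compat_l; [lra | apply Rinv_le_contravar; lra]. }
  set (r := (1 / (N * (N + 1)) - delta) / W).
  assert (HrW : r * W = 1 / (N * (N + 1)) - delta) by (unfold r; field; lra).
  assert (Hh : N * (r * W) = 1 / (N + 1) - N * delta) by (rewrite HrW; field; lra).
  destruct (exists_dnorm_mul_ge_near t0 (INR vn) (N * (r * W))) as [t [Htt0 Hvn_far]].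
  { nra. }
  { split; [apply Rmult_lt_0_compat|]; nra. }
  (* |t - t0| v_n <= n r v_(n-1) <= r v_n *)
  assert (Hclose : Rabs (t - t0) <= r).
  { apply Rmult_le_reg_r with (N * W); [nra|].
    apply Rle_trans with (Rabs (t - t0) * INR vn); [|lra].
    apply Rmult_le_compat_l; [apply Rabs_pos | exact HVn]. }
  exists t. split.
  - destruct (dnorm_mul_INR_le t0 w) as [Hlo Hhi]; [lra|].
    pose proof (Hgood w Hw) as Hdw. fold W in Hlo, Hhi, Hdw.
    assert (r < t0) by (apply Rmult_lt_reg_r with W; lra).
    assert (r < 1 - t0) by (apply Rmult_lt_reg_r with W; lra).
    apply Rabs_le_between in Hclose. lra.
  - intros v Hv. apply in_app_or in Hv as [Hv|[<-|[]]]; [|lra].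
    pose proof (dnorm_mul_lipschitz t0 t (INR v) (pos_INR v)) as Hlip.
    assert (Hv_le : INR v <= W) by (apply le_INR, Hw_max, Hv).
    assert (Rabs (t - t0) * INR v <= r * W)
      by (apply Rmult_le_compat; auto using Rabs_pos, pos_INR).
    specialize (Hgood v Hv).
    assert (0 <= N * delta) by nra. lra.
Qed.

End Extension.

Theorem mainTheorem6 (n : nat) (V' : list nat) (vn : nat) :
  (2 <= n)%nat ->
  length V' = (n - 1)%nat ->
  Sorted Nat.lt V' ->
  List.Forall (fun v => (0 < v)%nat) V' ->
  Rbar_le (Finite (1 / INR n)) (kappa V') ->
  (n * last V' 0 <= vn)%nat ->
  Rbar_le (Finite (1 / INR (n + 1))) (kappa (V' ++ vn :: nil)).
Proof.
  intros Hn Hlen Hsort Hpos Hk Hvn.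
  assert (Hne : V' <> nil) by (intros ->; simpl in Hlen; lia).
  assert (HN : 2 <= INR n) by (apply (le_INR 2); exact Hn).
  replace (INR (n + 1)) with (INR n + 1) by (rewrite plus_INR; reflexivity).
  apply kappa_ge_of_approx; [destruct V'; discriminate | apply Rdiv_lt_0_compat; lra |].
  intros eps Heps.
  set (delta := eps / INR n).
  assert (Hdelta : 0 < delta < 1 / (INR n * (INR n + 1))).
  { unfold delta. split; [apply Rdiv_lt_0_compat; lra|].
    apply Rmult_lt_reg_r with (INR n); [lra|]. field_simplify; lra. }
  destruct (kappa_approx V' _ delta Hk (proj1 Hdelta)) as [t0 [Ht0 Hgood]].
  replace eps with (INR n * delta) by (unfold delta; field; lra).
  apply (extended_witness n (last V' 0%nat) vn V') with (t0 := t0); auto.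
  - lia.
  - rewrite Forall_forall in Hpos. apply Hpos, last_In, Hne.
  - apply last_In, Hne.
  - exact (sorted_le_last V' Hsort).
Qed.
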